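(* For every $n\ge2$, $S_{2,0}(2n-1)=-\dfrac{3B_{2n}}{n}$.
   Context: $B_m$ denotes the $m$-th Bernoulli number. Let $a_0,a_1,\dots$ be indeterminates and $a(x)=\sum_{i\ge0}a_ix^i$. For a positive integer $j$ set $G(x)=\prod_{i=0}^{j-1}\frac{1+a(x)x^2}{1+ix}$, $H(x)=\prod_{i=1-j}^{-1}\frac{1+ix}{1+a(x)x^2}$, $u=2j-1$, $v=j(j-1)$. For each $n\ge1$ there are unique polynomials $S_0(n),\dots,S_n(n)\in\mathbb{Q}[a_0,\dots,a_{n-2}]$, independent of $j$, such that for every positive integer $j$ the coefficient of $x^{n-1}$ in $\frac{G(x)-H(x)}{x^2}(1+a(x)x^2)$ equals $u\big(a_{n-1}+S_0(n)+\sum_{i=1}^nS_i(n)v^i\big)$. For $1\le i\le n$, $S_{i,0}(n)\in\mathbb{Q}$ denotes the constant term of $S_i(n)$. *)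

From mathcomp Require Import all_boot all_order all_algebra.
From mathcomp Require Import mpoly.
Set Implicit Arguments. Unset Strict Implicit. Unset Printing Implicit Defensive.
Import GRing.Theory Num.Theory.
Local Open Scope ring_scope.

(*    B_m = -1/(m+1) * sum_{k<m} C(m+1,k) B_k   (so B_1 = -1/2).       *)
Fixpoint bern_seq (m : nat) : seq rat :=
  match m with
  | 0 => [:: 1]
  | m'.+1 =>
      let s := bern_seq m' in
      rcons s (- (m'.+2)%:R^-1 *
               \sum_(k < m'.+1) ('C(m'.+2, k))%:R * nth 0 s k)
  end.

Definition bernoulli (m : nat) : rat := nth 0 (bern_seq m) m.

(* Truncated formal power series.  Coefficients live in the ring       *)
(* Q[a_0, ..., a_{n-1}] = {mpoly rat[n.-1.+1]} (n >= 1).  Power series *)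
(* are represented by polynomials in x, exact modulo x^(N+1).          *)
(* Every factor below has constant term 1 (or is a polynomial), so     *)
(* the coefficients of degree <= N of products are exact.              *)

(* inverse modulo x^(N+1) of 1 + q, where q(0) = 0 :                   *)
Definition inv1p (R : comNzRingType) (N : nat) (q : {poly R}) : {poly R} :=
  \sum_(k < N.+1) (- q) ^+ k.

Section Setting.
Variable n : nat.
Local Notation R := {mpoly rat[n.-1.+1]}.

(* truncation order: we need coefficients up to degree n+1 *)
Definition trN : nat := n.+2.

(* (a_i with i >= n only affect coefficients of degree >= n+2).        *)
Definition aser : {poly R} := \sum_(i < n.-1.+1) ('X_i : R)%:P * 'X^i.

Definition onepax2 : {poly R} := 1 + aser * 'X^2.

Definition Gser (j : nat) : {poly R} :=
  \prod_(0 <= i < j) (onepax2 * inv1p trN ((i%:R : R) *: 'X)).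

(* H(x) = prod_{i=1-j}^{-1} (1 + i x) / (1 + a(x) x^2)
        = prod_{k=1}^{j-1} (1 - k x) / (1 + a(x) x^2) *)
Definition Hser (j : nat) : {poly R} :=
  \prod_(1 <= k < j) ((1 - (k%:R : R) *: 'X) * inv1p trN (aser * 'X^2)).

(* division by x^2 is drop_poly 2 (G - H has no terms of degree < 2).  *)
Definition lhs_coef (j : nat) : R :=
  (drop_poly 2 (Gser j - Hser j) * onepax2)`_(n.-1).

Definition embS (p : {mpoly rat[n.-1]}) : R :=
  mmap (@mpolyC _ _) (fun i : 'I_(n.-1) => 'X_(widen_ord (leqnSn _) i)) p.

Definition a_last : R := 'X_(@ord_max n.-1).

(* S = (S_0(n), ..., S_n(n)) (entries S i with i > n are irrelevant)   *)
Definition S_family (S : nat -> {mpoly rat[n.-1]}) : Prop :=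
  forall j : nat, (0 < j)%N ->
    lhs_coef j =
      ((2 * j - 1)%N%:R : R) *
        (a_last + embS (S 0%N)
         + \sum_(1 <= i < n.+1) embS (S i) * ((j * (j - 1))%N%:R : R) ^+ i).

End Setting.

Definition const_term (k : nat) (p : {mpoly rat[k]}) : rat := p@_0%MM.

(* Taking constant terms (all a_i = 0) in the defining identity of the S_i(N),
   N = 2n - 1, gives for every j >= 1
     [x^(2n)] (G_0 - H_0) = (2j - 1) sum_i S_(i,0) (j (j - 1))^i,
   where G_0 = prod_(i < j) 1/(1 + i x) and H_0 = prod_(0 < i < j) (1 - i x).
   Since log G_0 = sum_k (-1)^k p_k x^k / k and log H_0 = - sum_k p_k x^k / k
   with p_k(j) = sum_(i < j) i^k, Newton's identities make both sides
   polynomials in j.  The power sum p_k has constant term 0, linear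
   coefficient B_k, and no quadratic term for even k <> 2 (as
   p_k(-x) + p_k(x) + x^k = 0); in the quadratic coefficient the products of
   two power sums cancel between G_0 and H_0 because 2n is even.  Comparing
   the coefficients of 1, j and j^2 yields S_(0,0) = 0, S_(1,0) = B_(2n) / n
   and S_(2,0) + 3 S_(1,0) = 0. *)

From mathcomp Require Import all_boot all_order all_algebra.
From mathcomp Require Import mpoly ring zify.
Set Implicit Arguments.
Unset Strict Implicit.
Unset Printing Implicit Defensive.
Import GRing.Theory Num.Theory.
Local Open Scope ring_scope.

Lemma eq_poly_natr (R : numDomainType) (p q : {poly R}) (a : nat) :
  (forall j : nat, (a <= j)%N -> p.[j%:R] = q.[j%:R]) -> p = q.
Proof.
move=> pq; apply/eqP; rewrite -subr_eq0; apply/eqP.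
apply: (@roots_geq_poly_eq0 _ _ [seq i%:R | i <- iota a (size (p - q))]).
- apply/allP => _ /mapP [i + ->]; rewrite mem_iota => /andP [ai _].
  by rewrite /root !hornerE pq ?subrr.
- by rewrite map_inj_uniq ?iota_uniq // => i i' /eqP; rewrite eqr_nat => /eqP.
- by rewrite size_map size_iota.
Qed.

Lemma coef_comp_polyNX (R : comNzRingType) (p : {poly R}) i :
  (p \Po - 'X)`_i = (-1) ^+ i * p`_i.
Proof.
have -> : p \Po - 'X = \poly_(j < size p) ((-1) ^+ j * p`_j).
  rewrite comp_polyE poly_def; apply: eq_bigr => j _.
  by rewrite -scaleN1r exprZn scalerA mulrC.
by rewrite coef_poly; case: ltnP => // /(nth_default 0) ->; rewrite mulr0.
Qed.

Lemma natr_expS_sum (R : nzSemiRingType) (j k : nat) :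
  (j%:R : R) ^+ k.+1 = \sum_(i < j) \sum_(l < k.+1) 'C(k.+1, l)%:R * i%:R ^+ l.
Proof.
elim: j => [|j IH]; first by rewrite expr0n big_ord0.
rewrite big_ord_recr /= -IH -natr1 exprD1n big_ord_recr /= binn mulr1n addrC.
by congr (_ + _); apply: eq_bigr => l _; rewrite mulr_natl.
Qed.

Lemma coef1M (R : nzSemiRingType) (p q : {poly R}) :
  (p * q)`_1 = p`_0 * q`_1 + p`_1 * q`_0.
Proof. by rewrite coefM !big_ord_recr big_ord0 /= add0r. Qed.

Lemma coef2M (R : nzSemiRingType) (p q : {poly R}) :
  (p * q)`_2 = p`_0 * q`_2 + p`_1 * q`_1 + p`_2 * q`_0.
Proof. by rewrite coefM !big_ord_recr big_ord0 /= add0r. Qed.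

Section StrongRecursion.
Variables (T : Type) (f : nat -> seq T -> T).

Fixpoint strong_rec_seq (m : nat) : seq T :=
  if m is m'.+1 then rcons (strong_rec_seq m') (f m (strong_rec_seq m'))
  else [:: f 0 [::]].

Definition strong_rec (m : nat) : T := last (f 0 [::]) (strong_rec_seq m).

Lemma strong_rec_seqE m : strong_rec_seq m = mkseq strong_rec m.+1.
Proof.
elim: m => [|m IH] //=; rewrite mkseqS -IH.
by rewrite /strong_rec /= last_rcons.
Qed.

Lemma strong_recE m : strong_rec m = f m (mkseq strong_rec m).
Proof.
case: m => [|m] //; rewrite /strong_rec /= last_rcons.
by rewrite strong_rec_seqE.
Qed.

End StrongRecursion.

Lemma bernoulliS m : bernoulli m.+1 =
  - (m.+2)%:R^-1 * \sum_(k < m.+1) 'C(m.+2, k)%:R * bernoulli k.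
Proof.
pose F k (s : seq rat) := if k is k'.+1
  then - (k'.+2)%:R^-1 * \sum_(l < k'.+1) 'C(k'.+2, l)%:R * s`_l else 1.
have bernE k : bernoulli k = strong_rec F k.
  rewrite /bernoulli.
  have -> : bern_seq k = strong_rec_seq F k by elim: k => //= k ->.
  by rewrite strong_rec_seqE nth_mkseq.
rewrite bernE strong_recE; congr (_ * _); apply: eq_bigr => k _.
by rewrite nth_mkseq // bernE.
Qed.

(* Solved from x^(k+1) = sum_(i < x) ((i+1)^(k+1) - i^(k+1))
   = sum_(l <= k) 'C(k+1, l) p_l(x). *)
Definition psum_poly : nat -> {poly rat} :=
  strong_rec (fun k (P : seq {poly rat}) =>
    k.+1%:R^-1 *: ('X^(k.+1) - \sum_(l < k) 'C(k.+1, l)%:R *: P`_l)).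

Lemma psum_polyE k : psum_poly k =
  k.+1%:R^-1 *: ('X^(k.+1) - \sum_(l < k) 'C(k.+1, l)%:R *: psum_poly l).
Proof.
rewrite {1}/psum_poly strong_recE; congr (_ *: (_ - _)).
by apply: eq_bigr => l _; rewrite nth_mkseq.
Qed.

Lemma horner_psum_poly k (j : nat) :
  (psum_poly k).[j%:R] = \sum_(i < j) i%:R ^+ k.
Proof.
elim/ltn_ind: k => k IH.
rewrite psum_polyE hornerZ hornerD hornerN horner_sum hornerXn natr_expS_sum.
rewrite exchange_big big_ord_recr /=.
under [X in _ - X]eq_bigr => l _ do rewrite hornerZ IH // mulr_sumr.
by rewrite addrAC subrr add0r -mulr_sumr binSn mulKf ?pnatr_eq0.
Qed.

Lemma coef0_psum_poly k : (psum_poly k)`_0 = 0.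
Proof.
by rewrite -horner_coef0 -[0 : rat]/(0%:R) horner_psum_poly big_ord0.
Qed.

Lemma coef1_psum_poly k : (psum_poly k)`_1 = bernoulli k.
Proof.
elim/ltn_ind: k => -[_|k IH].
  by rewrite psum_polyE big_ord0 invr1 scale1r subr0 coefX.
rewrite psum_polyE bernoulliS coefZ coefB coefXn sub0r coef_sum mulrN -mulNr.
by congr (_ * _); apply: eq_bigr => l _; rewrite coefZ IH.
Qed.

Lemma psum_poly_shift k (x : rat) :
  (psum_poly k).[x + 1] = (psum_poly k).[x] + x ^+ k.
Proof.
have /(congr1 (horner^~ x)) : psum_poly k \Po ('X + 1) = psum_poly k + 'X^k.
  apply: (@eq_poly_natr _ _ _ 0) => j _.
  by rewrite horner_comp !hornerE natr1 !horner_psum_poly big_ord_recr.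
by rewrite horner_comp !hornerE.
Qed.

Lemma psum_poly_reflect k : (0 < k)%N -> ~~ odd k ->
  psum_poly k \Po (- 'X) + psum_poly k + 'X^k = 0.
Proof.
move=> k_gt0 k_even; set c := _ + _ + _.
have cS x : c.[x + 1] = c.[x].
  have evenX (y : rat) : (- y) ^+ k = y ^+ k.
    by rewrite exprNn -signr_odd (negbTE k_even) mul1r.
  rewrite !hornerE !horner_comp !hornerE psum_poly_shift.
  have -> : - x = - (x + 1) + 1 by ring.
  by rewrite psum_poly_shift evenX; ring.
apply: (@eq_poly_natr _ _ _ 0) => j _; rewrite horner0.
elim: j => [|j IH]; last by rewrite -natr1 cS.
rewrite !hornerE horner_comp !hornerE oppr0 horner_coef0 coef0_psum_poly.
by rewrite expr0n gtn_eqF // !addr0.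
Qed.

Lemma coef2_psum_poly k : (0 < k)%N -> ~~ odd k -> k != 2%N ->
  (psum_poly k)`_2 = 0.
Proof.
move=> k_gt0 k_even k_neq2.
have /(congr1 (fun p : {poly rat} => p`_2)) := psum_poly_reflect k_gt0 k_even.
rewrite !coefD coef_comp_polyNX coefXn eq_sym (negbTE k_neq2) addr0 coef0.
by rewrite expr2 mulrNN mul1r => /eqP; rewrite -mulr2n mulrn_eq0 => /eqP.
Qed.

Section LogDerivative.
Variable R : comNzRingType.
Implicit Types (g L : {poly R}) (M : nat).

Definition logder_mod M g L : Prop :=
  forall m, (m < M)%N -> g^`()`_m = (g * L)`_m.

Lemma coefMl_eq (a b c : {poly R}) m :
  (forall i, (i <= m)%N -> a`_i = b`_i) -> (a * c)`_m = (b * c)`_m.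
Proof.
by move=> ab; rewrite !coefM; apply: eq_bigr => i _; rewrite ab // -ltnS.
Qed.

Lemma logder_modM M g1 L1 g2 L2 : logder_mod M g1 L1 -> logder_mod M g2 L2 ->
  logder_mod M (g1 * g2) (L1 + L2).
Proof.
move=> gL1 gL2 m ltmM.
have ltiM i : (i <= m)%N -> (i < M)%N by move/leq_ltn_trans; apply.
rewrite derivM coefD (coefMl_eq g2 (fun i lim => gL1 i (ltiM i lim))).
rewrite [g1 * g2^`()]mulrC.
rewrite (coefMl_eq g1 (fun i lim => gL2 i (ltiM i lim))) -coefD.
by rewrite (_ : _ + _ = g1 * g2 * (L1 + L2)) //; ring.
Qed.

Lemma logder_mod_prod M (I : Type) (r : seq I) (g L : I -> {poly R}) :
  (forall i, logder_mod M (g i) (L i)) ->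
  logder_mod M (\prod_(i <- r) g i) (\sum_(i <- r) L i).
Proof.
move=> gL; apply: (big_ind2 (logder_mod M)) => //; last exact: logder_modM.
by move=> m _; rewrite derivC mul1r coef0.
Qed.

Lemma inv1pZX M (c : R) : inv1p M (c *: 'X) = \poly_(k < M.+1) (- c) ^+ k.
Proof.
by rewrite /inv1p poly_def; apply: eq_bigr => k _; rewrite -scaleNr exprZn.
Qed.

Lemma logder_mod_inv1p M (c : R) :
  logder_mod M (inv1p M (c *: 'X)) (\poly_(k < M) (- c) ^+ k.+1).
Proof.
move=> m ltmM; rewrite inv1pZX coef_deriv coefM coef_poly ltnS ltmM.
rewrite (eq_bigr (fun=> (- c) ^+ m.+1)) ?sumr_const ?card_ord // => i _.
have leim : (i <= m)%N by rewrite -ltnS.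
rewrite coef_poly ltnS (leq_trans leim (ltnW ltmM)) coef_poly.
by rewrite (leq_ltn_trans (leq_subr i m) ltmM) -exprD addnS subnKC.
Qed.

Lemma logder_mod_1subX M (c : R) :
  logder_mod M (1 - c *: 'X) (\poly_(k < M) - c ^+ k.+1).
Proof.
move=> m ltmM; rewrite derivB derivC derivZ derivX sub0r alg_polyC coefN coefC.
rewrite mulrBl mul1r coefB -scalerAl coefZ coefXM !coef_poly ltmM.
case: m ltmM => [|m] ltmM /=; first by rewrite mulr0 subr0 expr1.
by rewrite (ltnW ltmM) mulrN exprS opprK addrC subrr oppr0.
Qed.

End LogDerivative.

(* The coefficient e_m of x^m in exp (sum_k s_k p_k(J) x^k / k), a polynomial
   in J, computed by Newton's recursion m e_m = sum_(k <= m) s_k p_k e_(m-k). *)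
Definition psum_exp (s : nat -> rat) : nat -> {poly rat} :=
  strong_rec (fun m (E : seq {poly rat}) => if m is m'.+1
    then m%:R^-1 *: \sum_(k < m) s k.+1 *: (psum_poly k.+1 * E`_(m' - k))
    else 1).

Section PsumExp.
Variable s : nat -> rat.

Lemma psum_exp0 : psum_exp s 0 = 1. Proof. by []. Qed.

Lemma psum_expS m : psum_exp s m.+1 =
  m.+1%:R^-1 *:
    \sum_(k < m.+1) s k.+1 *: (psum_poly k.+1 * psum_exp s (m - k)).
Proof.
rewrite {1}/psum_exp strong_recE; congr (_ *: _).
by apply: eq_bigr => k _; rewrite nth_mkseq // ltnS leq_subr.
Qed.

Lemma horner_psum_exp M (g L : {poly rat}) (j : nat) :
  logder_mod M g L -> g`_0 = 1 ->
  (forall k, (k < M)%N -> L`_k = s k.+1 * (psum_poly k.+1).[j%:R]) ->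
  forall m, (m <= M)%N -> (psum_exp s m).[j%:R] = g`_m.
Proof.
move=> gL g0 Lk; elim/ltn_ind => -[_ _|m IH lemM]; first by rewrite hornerC.
have newton := gL m lemM; rewrite coef_deriv coefMr -mulr_natr in newton.
rewrite -[RHS](mulfK (_ : m.+1%:R != 0)) ?pnatr_eq0 // newton mulrC.
rewrite psum_expS hornerZ horner_sum; congr (_ * _); apply: eq_bigr => k _.
have lekm : (k <= m)%N by rewrite -ltnS.
rewrite hornerZ hornerM IH ?Lk ?ltnS ?leq_subr ?(leq_ltn_trans lekm) //.
  by rewrite mulrA mulrC.
exact: leq_trans (leq_subr k m) (ltnW lemM).
Qed.

Lemma coef0_psum_exp m : (psum_exp s m)`_0 = (m == 0)%:R.
Proof.
case: m => [|m]; first by rewrite psum_exp0 coefC.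
rewrite psum_expS coefZ coef_sum big1 ?mulr0 // => k _.
by rewrite coefZ coef0M coef0_psum_poly mul0r mulr0.
Qed.

Lemma coef1_psum_expS m :
  (psum_exp s m.+1)`_1 = m.+1%:R^-1 * (s m.+1 * bernoulli m.+1).
Proof.
rewrite psum_expS coefZ coef_sum big_ord_recr /= subnn big1 ?add0r => [|k _].
  rewrite coefZ coef1M coef0_psum_poly coef1_psum_poly coef0_psum_exp.
  by rewrite mul0r add0r mulr1.
rewrite coefZ coef1M coef0_psum_poly coef0_psum_exp subn_eq0 leqNgt ltn_ord.
by rewrite mul0r add0r mulr0 mulr0.
Qed.

Lemma coef2_psum_expS m : (psum_exp s m.+1)`_2 = m.+1%:R^-1 *
  (\sum_(k < m) s k.+1 * bernoulli k.+1 * (psum_exp s (m - k))`_1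
   + s m.+1 * (psum_poly m.+1)`_2).
Proof.
rewrite psum_expS coefZ coef_sum big_ord_recr /= subnn; congr (_ * (_ + _)).
  apply: eq_bigr => k _; rewrite coefZ coef2M coef0_psum_poly coef1_psum_poly.
  rewrite coef0_psum_exp subn_eq0 leqNgt ltn_ord.
  by rewrite mul0r add0r mulr0 addr0 mulrA.
rewrite coefZ coef2M coef0_psum_poly coef1_psum_poly psum_exp0 !coef1 /=.
by rewrite mul0r add0r mulr0 add0r mulr1.
Qed.

End PsumExp.

Local Notation psum_expG := (psum_exp (fun k => (-1) ^+ k)).
Local Notation psum_expH := (psum_exp (fun=> -1)).

Lemma coef1_psum_expGH m : odd m ->
  (psum_expG m.+1 - psum_expH m.+1)`_1 = m.+1%:R^-1 * (2 * bernoulli m.+1).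
Proof.
by move=> m_odd; rewrite coefB !coef1_psum_expS -signr_odd /= m_odd; ring.
Qed.

Lemma coef2_psum_expGH m : odd m -> m.+1 != 2 ->
  (psum_expG m.+1 - psum_expH m.+1)`_2 = 0.
Proof.
move=> m_odd m_neq2; rewrite coefB !coef2_psum_expS.
rewrite coef2_psum_poly //=; last by rewrite negbK.
rewrite !mulr0 !addr0 -mulrBr -sumrB big1 ?mulr0 // => k _.
(* (-1)^(k+1) (-1)^(m-k) = (-1)^(m+1) = 1 = (-1) (-1): the terms cancel. *)
have [r def_r] : exists r, (m - k = r.+1)%N.
  by exists (m - k.+1)%N; rewrite subnSK.
have : odd r.+1 = odd k.+1.
  have := congr1 odd (subnKC (ltnW (ltn_ord k))); rewrite def_r oddD m_odd /=.
  by case: (odd k); case: (odd r).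
rewrite def_r !coef1_psum_expS -(signr_odd _ r.+1) -(signr_odd _ k.+1) => ->.
by case: (odd k.+1); ring.
Qed.

Definition Gser0 (M j : nat) : {poly rat} :=
  \prod_(0 <= i < j) inv1p M (i%:R *: 'X).
Definition Hser0 (j : nat) : {poly rat} := \prod_(1 <= i < j) (1 - i%:R *: 'X).

Lemma coef_Gser0 M j m : (m <= M)%N -> (Gser0 M j)`_m = (psum_expG m).[j%:R].
Proof.
move=> lemM; symmetry.
pose L := \sum_(0 <= i < j) \poly_(k < M) (- i%:R) ^+ k.+1 : {poly rat}.
apply: (horner_psum_exp (M := M) (L := L)) => //.
- by apply: logder_mod_prod => i; apply: logder_mod_inv1p.
- by rewrite /Gser0 coef0_prod big1 // => i _; rewrite inv1pZX coef_poly expr0.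
move=> k ltkM; rewrite {}/L coef_sum big_mkord horner_psum_poly mulr_sumr.
by apply: eq_bigr => i _; rewrite coef_poly ltkM exprNn.
Qed.

Lemma coef_Hser0 M j m : (m <= M)%N -> (Hser0 j)`_m = (psum_expH m).[j%:R].
Proof.
move=> lemM; symmetry.
pose L := \sum_(1 <= i < j) \poly_(k < M) - (i%:R : rat) ^+ k.+1.
apply: (horner_psum_exp (M := M) (L := L)) => //.
- by apply: logder_mod_prod => i; apply: logder_mod_1subX.
- rewrite /Hser0 coef0_prod big1 // => i _.
  by rewrite coefB coef1 coefZ coefX mulr0 subr0.
move=> k ltkM; rewrite {}/L horner_psum_poly mulN1r.
case: j => [|j]; first by rewrite big_geq // big_ord0 oppr0 coef0.
rewrite -(big_mkord xpredT (fun i => i%:R ^+ k.+1)) (big_ltn (ltn0Sn j)).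
rewrite expr0n add0r -sumrN coef_sum.
by apply: eq_bigr => i _; rewrite coef_poly ltkM.
Qed.

Local Notation ev0 := (mcoeff 0%MM).

Lemma prod_expr0n (R : comNzSemiRingType) k (m : 'X_{1..k}) :
  \prod_(i < k) (0 : R) ^+ m i = (m == 0%MM)%:R.
Proof.
have [->|m_neq0] := eqVneq m 0%MM.
  by rewrite big1 // => i _; rewrite mnm0E expr0.
have [i mi_neq0] : exists i, m i != 0%N.
  apply/existsP; move: m_neq0; apply: contraNT => /existsPn m0.
  by apply/eqP/mnmP => i; rewrite mnm0E; apply/eqP/negPn.
by rewrite (bigD1 i) //= expr0n (negbTE mi_neq0) mul0r.
Qed.

Lemma mcoeff0X k (i : 'I_k) : ev0 ('X_i : {mpoly rat[k]}) = 0.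
Proof. by rewrite mcoeffX mnm1_eq0. Qed.

Lemma mcoeff0_embS k (p : {mpoly rat[k.-1]}) : ev0 (embS (n := k) p) = p@_0.
Proof.
rewrite /embS /mmap [in RHS](mpolyE p) !raddf_sum /=; apply: eq_bigr => m _.
rewrite rmorphM /= mcoeffC eqxx mulr1 mcoeffZ mcoeffX; congr (_ * _).
rewrite /mmap1 rmorph_prod /= -prod_expr0n.
by apply: eq_bigr => i _; rewrite rmorphXn /= mcoeff0X.
Qed.

Section ConstantTerms.
Variable k : nat.

Lemma map_aser0 : map_poly ev0 (aser k) = 0.
Proof.
rewrite rmorph_sum big1 // => i _.
by rewrite rmorphM /= map_polyC /= mcoeff0X mul0r.
Qed.

Lemma map_onepax2 : map_poly ev0 (onepax2 k) = 1.
Proof. by rewrite rmorphD rmorph1 rmorphM /= map_aser0 mul0r addr0. Qed.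

Lemma map_natrZX (i : nat) :
  map_poly ev0 ((i%:R : {mpoly rat[k.-1.+1]}) *: 'X) = i%:R *: 'X.
Proof.
by apply/polyP => l; rewrite coef_map /= !coefZ !coefX rmorphM /= !rmorph_nat.
Qed.

Lemma map_Gser j : map_poly ev0 (Gser k j) = Gser0 (trN k) j.
Proof.
rewrite rmorph_prod; apply: eq_bigr => i _.
rewrite rmorphM /= map_onepax2 mul1r rmorph_sum; apply: eq_bigr => l _.
by rewrite rmorphXn rmorphN /= map_natrZX.
Qed.

Lemma map_Hser j : map_poly ev0 (Hser k j) = Hser0 j.
Proof.
rewrite rmorph_prod; apply: eq_bigr => i _.
rewrite rmorphM rmorphB rmorph1 /= map_natrZX rmorph_sum big_ord_recl /=.
rewrite big1 ?expr0 ?rmorph1 ?addr0 ?mulr1 // => l _.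
by rewrite rmorphXn rmorphN rmorphM /= map_aser0 mul0r oppr0 expr0n.
Qed.

Lemma mcoeff0_lhs_coef j : (0 < k)%N ->
  ev0 (lhs_coef k j) = (Gser0 k.+2 j)`_k.+1 - (Hser0 j)`_k.+1.
Proof.
move=> k_gt0; rewrite /lhs_coef -coef_map rmorphM /= map_onepax2 mulr1.
rewrite coef_map coef_drop_poly -coef_map rmorphB /= map_Gser map_Hser coefB.
by rewrite addn2 prednK.
Qed.

End ConstantTerms.

Definition uv_poly (c : nat -> rat) (k : nat) : {poly rat} :=
  ('X *+ 2 - 1) * \sum_(0 <= i < k.+1) (c i)%:P * ('X * ('X - 1)) ^+ i.

Lemma coef_uv_poly (c : nat -> rat) k : (2 <= k)%N ->
  [/\ (uv_poly c k)`_0 = - c 0%N, (uv_poly c k)`_1 = c 0%N *+ 2 + c 1%N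
    & (uv_poly c k)`_2 = - (c 1%N *+ 3 + c 2%N)].
Proof.
move=> k_ge2; pose Q := \sum_(0 <= i < k.+1) (c i)%:P * ('X * ('X - 1)) ^+ i.
have Q_low l : (l <= 2)%N -> Q`_l = [:: c 0%N; - c 1%N; c 1%N + c 2%N]`_l.
  move=> l_le2; rewrite /Q; do 3!rewrite big_ltn ?ltnS ?(ltnW k_ge2) //.
  rewrite !coefD coef_sum.
  rewrite big_nat big1 ?addr0 => [|i /andP [i_ge3 _]]; last first.
    by rewrite coefCM exprMn coefXnM (leq_ltn_trans l_le2 i_ge3) mulr0.
  rewrite expr0 expr1 !coefCM !coefC exprMn coefXnM.
  case: l l_le2 => [|[|[|l]]] //= _; rewrite ?coefXM ?coefB ?coefX ?coef1 /=.
  - by rewrite !mulr0 !addr0 mulr1.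
  - by rewrite !mulr0 !addr0 add0r sub0r mulrN1.
  - by rewrite !mulr0 add0r expr2 coef0M coefB coefX coef1 !sub0r mulrNN !mulr1.
have uvE l : (uv_poly c k)`_l = ('X * Q)`_l *+ 2 - Q`_l.
  by rewrite /uv_poly -/Q mulrBl mul1r mulrnAl coefB coefMn.
by rewrite !uvE !coefXM /= !Q_low //=; split; ring.
Qed.

Lemma S_family_const_poly k (S : nat -> {mpoly rat[k.-1]}) :
  (0 < k)%N -> S_family S ->
  psum_expG k.+1 - psum_expH k.+1 = uv_poly (fun i => const_term (S i)) k.
Proof.
move=> k_gt0 hS; apply: (@eq_poly_natr _ _ _ 1) => j j_gt0.
rewrite hornerD hornerN.
rewrite -(coef_Gser0 (M := k.+2)) // -(coef_Hser0 (M := k.+2)) //.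
rewrite -mcoeff0_lhs_coef // hS // rmorphM /= rmorph_nat !rmorphD /= mcoeff0X.
rewrite mcoeff0_embS add0r rmorph_sum /uv_poly (big_ltn (ltn0Sn k)).
rewrite hornerM !hornerD horner_sum !hornerE.
congr (_ * (_ + _)); first by rewrite natrB ?muln_gt0 // natrM mulr_natl mulr2n.
apply: eq_bigr => i _; rewrite rmorphM /= mcoeff0_embS rmorphXn rmorph_nat.
by rewrite !hornerE natrM natrB.
Qed.

Theorem proposition4p7 (n : nat) (hn : (2 <= n)%N)
  (S : nat -> {mpoly rat[(2 * n - 1)%N.-1]}) :
  S_family S ->
  const_term (S 2%N) = - (3%:R * bernoulli (2 * n)) / n%:R.
Proof.
move=> hS; set c := fun i => const_term (S i).
have N_def : (2 * n - 1).+1 = (2 * n)%N by lia.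
have N_ge2 : (2 <= 2 * n - 1)%N by lia.
have N_odd : odd (2 * n - 1) by rewrite -[odd _]negbK -oddS N_def oddM.
have [uv0 uv1 uv2] := coef_uv_poly c N_ge2.
have D := S_family_const_poly (ltnW N_ge2) hS; rewrite -/c in D.
have c0 : c 0%N = 0.
  by apply/eqP; rewrite -oppr_eq0 -uv0 -D coefB !coef0_psum_exp subrr.
have c2 : c 2%N = - c 1%N *+ 3.
  have N_neq2 : (2 * n - 1).+1 != 2 by rewrite N_def; lia.
  have := coef2_psum_expGH N_odd N_neq2; rewrite D uv2 => /eqP.
  by rewrite oppr_eq0 addrC addr_eq0 mulNrn => /eqP.
have := coef1_psum_expGH N_odd; rewrite D uv1 N_def c0 mul0rn add0r.
rewrite -/(c 2%N) c2 => ->; rewrite natrM; field.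
by rewrite pnatr_eq0 -lt0n (ltnW hn).
Qed.
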